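(* Let $q\ge2$ be an integer and $p$ a prime not dividing $q$. For every finite field $F$ of characteristic $p$ and every positive integer $d$, every $d$-dimensional VLNC solution over $F$ of the Char-$q$-$s$ network has $s$-coefficient matrix $A_1=0$ on $e_1$.
   Context: Vector linear network coding: each source $v$ generates $x_v\in F^d$; an edge out of a source $v$ carries $Ax_v$ for a $d\times d$ matrix $A$ over $F$; an edge out of an intermediate node carries $\sum A_{e',e}y_{e'}$ over the edges $e'$ entering that node; a terminal computes vectors $\sum B_ey_e$ over its incoming edges; a $d$-dimensional VLNC solution over $F$ is such a code with which every terminal computes each demanded message for all message choices. The Char-$q$-$s$ network (integer $q\ge2$): sources $s,x_1,\dots,x_{q+2}$; intermediate nodes $m_1,\dots,m_{q+3},n_1,\dots,n_{q+3}$; terminals $r_1,\dots,r_{q+3}$; edges: $(x_1,m_i)$ for $1\le i\le q+1$; $(s,m_1)$ and $(s,m_i)$ for $4\le i\le q+3$; $(x_i,m_j)$ for $2\le i,j\le q+2$, $i\ne j$; $(x_i,m_{q+3})$ for $1\le i\le q+2$; $e_i=(m_i,n_i)$ for $1\le i\le q+3$; $(n_i,r_i)$ for $1\le i\le q+2$; $(n_{q+3},r_i)$ and $(n_i,r_{q+3})$ for $1\le i\le q+2$; $(x_i,r_1)$ for $2\le i\le q+1$; $(x_1,r_{q+2})$; $(s,r_2)$; $(s,r_3)$. Demands: $r_1$ demands $x_{q+2}$; $r_i$ demands $x_i$ for $2\le i\le q+2$; $r_{q+3}$ demands $x_1$; no terminal demands $s$. In any $d$-dimensional VLNC over $F$ the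 vector on $e_1$ has the form $y_{e_1}=M_1x_1+A_1s$ with $d\times d$ matrices $M_1,A_1$; $A_1$ is called the $s$-coefficient matrix on $e_1$. *)

From HB Require Import structures.
From mathcomp Require Import all_boot all_order all_algebra.
Set Implicit Arguments. Unset Strict Implicit. Unset Printing Implicit Defensive.
Import GRing.Theory.
Local Open Scope ring_scope.

(* ---------- Nodes of the Char-q-s network (1-based indices as in the paper) *)
Definition node := (nat * nat)%type.
Definition S_ : node := (0, 0)%N.
Definition X (i : nat) : node := (1, i)%N.
Definition M (i : nat) : node := (2, i)%N.
Definition N (i : nat) : node := (3, i)%N.
Definition R (i : nat) : node := (4, i)%N.

(* Edges are identified by (tail, head); the network has no parallel edges. *)
Definition edge := (node * node)%type.

Definition charqs_edges (q : nat) : seq edge :=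
  [seq (X 1, M i) | i <- iota 1 q.+1]
  ++ (S_, M 1) :: [seq (S_, M i) | i <- iota 4 q]
  ++ [seq (X ij.1, M ij.2) | ij <- [seq ij <- [seq (i, j) | i <- iota 2 q.+1, j <- iota 2 q.+1]
                                     | ij.1 != ij.2]]
  ++ [seq (X i, M (q + 3)) | i <- iota 1 (q + 2)]
  ++ [seq (M i, N i) | i <- iota 1 (q + 3)]
  ++ [seq (N i, R i) | i <- iota 1 (q + 2)]
  ++ [seq (N (q + 3), R i) | i <- iota 1 (q + 2)]
  ++ [seq (N i, R (q + 3)) | i <- iota 1 (q + 2)]
  ++ [seq (X i, R 1) | i <- iota 2 q]
  ++ [:: (X 1, R (q + 2)); (S_, R 2); (S_, R 3)].

Definition charqs_sources (q : nat) : seq node :=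
  S_ :: [seq X i | i <- iota 1 (q + 2)].

(* demands: pairs (terminal, demanded message source) *)
Definition charqs_demands (q : nat) : seq (node * node) :=
  (R 1, X (q + 2)) :: [seq (R i, X i) | i <- iota 2 q.+1] ++ [:: (R (q + 3), X 1)].

Record vlnc (F : fieldType) (d : nat) := Vlnc {
  enc : edge -> 'M[F]_d;                 (* A_e on an edge e out of a source *)
  coef : edge -> edge -> 'M[F]_d;        (* A_{e',e} at an intermediate node *)
  dec : node -> node -> edge -> 'M[F]_d  (* B_e used by terminal t to compute message v *)
}.

Definition edge_vectors_ok (F : fieldType) (d : nat) (E : seq edge) (src : seq node)
    (C : vlnc F d) (msg : node -> 'cV[F]_d) (y : edge -> 'cV[F]_d) : Prop :=
  forall e, e \in E ->
    if e.1 \in src then y e = enc C e *m msg e.1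
    else y e = \sum_(e' <- E | e'.2 == e.1) coef C e' e *m y e'.

Definition is_vlnc_solution (F : fieldType) (d : nat) (E : seq edge) (src : seq node)
    (dem : seq (node * node)) (C : vlnc F d) : Prop :=
  forall (msg : node -> 'cV[F]_d) (y : edge -> 'cV[F]_d),
    edge_vectors_ok E src C msg y ->
    forall tv, tv \in dem ->
      \sum_(e <- E | e.2 == tv.1) dec C tv.1 tv.2 e *m y e = msg tv.2.

Definition charqs_solution (q : nat) (F : fieldType) (d : nat) (C : vlnc F d) : Prop :=
  is_vlnc_solution (charqs_edges q) (charqs_sources q) (charqs_demands q) C.

(* y_{e_1} = M_1 x_1 + A_1 s with e_1 = (m_1, n_1); m_1 has in-edges (x_1,m_1), (s,m_1),
   so the s-coefficient matrix is A_1 = A_{(s,m_1),e_1} A_{(s,m_1)}. *)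
Definition s_coeff_e1 (F : fieldType) (d : nat) (C : vlnc F d) : 'M[F]_d :=
  coef C (S_, M 1) (M 1, N 1) *m enc C (S_, M 1).

From HB Require Import structures.
From mathcomp Require Import all_boot all_order all_algebra zify.
Set Implicit Arguments. Unset Strict Implicit. Unset Printing Implicit Defensive.
Import GRing.Theory.
Local Open Scope ring_scope.

(* Feeding a single message u = v through the code (all other messages 0) yields edge
   vectors [transfer u e *m v], so a solution amounts to identities between transfer
   matrices.  Write M_k^j for the transfer of x_j on e_k.  Terminal r_k (2 <= k <= q+2)
   hears x_j only through e_k and e_(q+3), and m_k does not see x_k, hence
   W_k M_k^j + Z_k M_(q+3)^j = [k = j] with M_k^k = 0: all these matrices are invertible
   and M_k^j = - W_k^-1 Z_k M_(q+3)^j for k <> j.  Terminal r_(q+3) reads the e_i,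
   i <= q+2, through gains G_i and must cancel every x_j, j >= 2, so with
   H_i := G_i W_i^-1 Z_i the sum of the H_i over i <> j vanishes for every j; summing over
   j gives q * sum_i H_i = 0, and as the characteristic does not divide q, all H_i and
   hence all G_i (i >= 2) vanish.  Then r_(q+3) decodes from e_1 alone:
   G_1 M_1^(x_1) = 1 and G_1 A_1 = 0, whence A_1 = 0. *)

Lemma filter_nil_in (T : eqType) (a : pred T) (s : seq T) :
  {in s, forall x, ~~ a x} -> filter a s = [::].
Proof. by move/hasPn; rewrite has_filter negbK => /eqP. Qed.

Lemma mem_map_iotaP (T : eqType) (f : nat -> T) a n x :
  x \in [seq f i | i <- iota a n] -> exists2 i, x = f i & (a <= i < a + n)%N.
Proof. by case/mapP => i; rewrite mem_iota => ? ->; exists i. Qed.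

Lemma filter_map_iota_pred1 (T : eqType) (f : nat -> T) (P : pred T) a n k :
  (a <= k < a + n)%N -> (forall i, P (f i) = (i == k)) ->
  [seq x <- [seq f i | i <- iota a n] | P x] = [:: f k].
Proof.
move=> Hk Pf; rewrite filter_map (eq_filter (a2 := pred1 k)) //.
by rewrite filter_pred1_uniq ?iota_uniq ?mem_iota.
Qed.

Lemma sums_but_one_eq0 (F : fieldType) (V : lmodType F) (T : eqType) (s : seq T) (H : T -> V) :
  uniq s -> (size s).-1%:R != 0 :> F ->
  (forall j, j \in s -> \sum_(i <- s | i != j) H i = 0) -> forall j, j \in s -> H j = 0.
Proof.
move=> s_uniq n_neq0 others0 j js; set S := \sum_(i <- s) H i.
have HS : {in s, H =1 fun=> S}.
  by move=> i i_s; rewrite /S (bigD1_seq i) //= others0 // addr0.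
have sumS : S = S *+ size s.
  by rewrite {1}/S (eq_big_seq _ HS) big_const_seq count_predT iter_addr addr0.
have : (size s).-1%:R *: S = 0.
  apply: (@addIr _ S); rewrite scaler_nat add0r -mulrSr prednK -?sumS //.
  by case: s js {s_uniq n_neq0 others0 HS sumS S}.
by rewrite HS // => /eqP; rewrite scaler_eq0 (negbTE n_neq0) => /eqP.
Qed.

Lemma eq_mx_cV (F : fieldType) d (A B : 'M[F]_d) : (forall v : 'cV_d, A *m v = B *m v) -> A = B.
Proof.
move=> AB; apply: trmx_inj; apply/eqP/mulmxP => u.
by rewrite -[u]trmxK -!trmx_mul AB.
Qed.

Section DecodingGains.

Variables (F : fieldType) (d : nat) (T : eqType) (s : seq T).
Variables (W Z K G : T -> 'M[F]_d) (Mx : T -> T -> 'M[F]_d).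

(* In the network, [Mx k j] is the transfer of x_j on e_k and [K j] that on e_(q+3);
   [W k] and [Z k] are the gains of e_k and e_(q+3) at r_k, and [G i] that of e_i at r_(q+3). *)

Hypothesis s_uniq : uniq s.
Hypothesis size_neq0 : (size s).-1%:R != 0 :> F.
Hypothesis decodes : forall k j, k \in s -> j \in s ->
  W k *m Mx k j + Z k *m K j = if k == j then 1%:M else 0.
Hypothesis Mx_diag : forall k, k \in s -> Mx k k = 0.
Hypothesis decodes_last : forall j, j \in s -> \sum_(i <- s) G i *m Mx i j = 0.

Lemma decode_ZK k : k \in s -> Z k *m K k = 1%:M.
Proof. by move=> ks; have := decodes ks ks; rewrite Mx_diag // mulmx0 add0r eqxx. Qed.

Lemma decode_Z_unit k : k \in s -> Z k \in unitmx.
Proof. by move=> /decode_ZK /mulmx1_unit[]. Qed.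

Lemma decode_K_unit k : k \in s -> K k \in unitmx.
Proof. by move=> /decode_ZK /mulmx1_unit[]. Qed.

Lemma exists_other_index k : k \in s -> exists2 j, j \in s & j != k.
Proof.
move=> ks; case rem_ks: (rem k s) => [|j r].
  by move: size_neq0; rewrite -(size_rem ks) rem_ks eqxx.
have : j \in rem k s by rewrite rem_ks mem_head.
by rewrite mem_rem_uniq // => /andP[j_neq j_s]; exists j.
Qed.

Lemma decode_offdiag k j : k \in s -> j \in s -> k != j ->
  W k *m Mx k j = - (Z k *m K j).
Proof. by move=> ks js kj; apply/eqP; rewrite -addr_eq0 decodes // (negbTE kj). Qed.

Lemma decode_W_unit k : k \in s -> W k \in unitmx.
Proof.
move=> ks; have [j js jk] := exists_other_index ks.
suff : W k *m - (Mx k j *m invmx (K j) *m invmx (Z k)) = 1%:M by case/mulmx1_unit.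
rewrite mulmxN !mulmxA decode_offdiag 1?eq_sym // !mulNmx opprK.
by rewrite mulmxK ?decode_K_unit // mulmxV ?decode_Z_unit.
Qed.

Lemma decode_offdiagE k j : k \in s -> j \in s -> k != j ->
  Mx k j = - (invmx (W k) *m Z k *m K j).
Proof.
move=> ks js kj; rewrite -[LHS](mulKmx (decode_W_unit ks)) decode_offdiag //.
by rewrite mulmxN mulmxA.
Qed.

Lemma decoding_gains_eq0 i : i \in s -> G i = 0.
Proof.
move=> i_s; pose H k := G k *m invmx (W k) *m Z k.
suff : H i = 0.
  move/(congr1 (mulmx^~ (invmx (Z i) *m W i))); rewrite mul0mx !mulmxA.
  by rewrite mulmxK ?decode_Z_unit // mulmxKV ?decode_W_unit.
apply: (sums_but_one_eq0 s_uniq size_neq0 _ i_s) => j js.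
suff : (\sum_(i <- s | i != j) H i) *m K j = 0.
  by move/(congr1 (mulmx^~ (invmx (K j)))); rewrite mul0mx mulmxK ?decode_K_unit.
have -> : (\sum_(i <- s | i != j) H i) *m K j = - \sum_(i <- s | i != j) G i *m Mx i j.
  rewrite mulmx_suml -sumrN big_seq_cond [RHS]big_seq_cond.
  by apply: eq_bigr => k /andP[ks kj]; rewrite decode_offdiagE // mulmxN opprK !mulmxA.
have := decodes_last js; rewrite (bigD1_seq j) //= Mx_diag // mulmx0 add0r => ->.
by rewrite oppr0.
Qed.

End DecodingGains.

(* [charqs_edges] cut into its blocks; keeping the blocks folded stops [filter_cat] from
   splitting the list comprehensions inside them. *)
Definition x1_m_edges q : seq edge := [seq (X 1, M i) | i <- iota 1 q.+1].
Definition s_m_edges q : seq edge := (S_, M 1) :: [seq (S_, M i) | i <- iota 4 q].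
Definition x_m_edges q : seq edge :=
  [seq (X ij.1, M ij.2) | ij <- [seq ij <- [seq (i, j) | i <- iota 2 q.+1, j <- iota 2 q.+1]
                                 | ij.1 != ij.2]].
Definition x_mlast_edges q : seq edge := [seq (X i, M (q + 3)) | i <- iota 1 (q + 2)].
Definition m_n_edges q : seq edge := [seq (M i, N i) | i <- iota 1 (q + 3)].
Definition n_r_edges q : seq edge := [seq (N i, R i) | i <- iota 1 (q + 2)].
Definition nlast_r_edges q : seq edge := [seq (N (q + 3), R i) | i <- iota 1 (q + 2)].
Definition n_rlast_edges q : seq edge := [seq (N i, R (q + 3)) | i <- iota 1 (q + 2)].
Definition x_r1_edges q : seq edge := [seq (X i, R 1) | i <- iota 2 q].
Definition direct_edges q : seq edge := [:: (X 1, R (q + 2)); (S_, R 2); (S_, R 3)].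

Lemma charqs_edges_blocks q : charqs_edges q =
  x1_m_edges q ++ s_m_edges q ++ x_m_edges q ++ x_mlast_edges q ++ m_n_edges q
  ++ n_r_edges q ++ nlast_r_edges q ++ n_rlast_edges q ++ x_r1_edges q ++ direct_edges q.
Proof. by []. Qed.

Lemma x_m_edgesP q e : e \in x_m_edges q ->
  exists i j, [/\ e = (X i, M j), (2 <= i <= q + 2)%N, (2 <= j <= q + 2)%N & i != j].
Proof.
case/mapP => [[i j]]; rewrite mem_filter => /andP[ij_neq ij_in] ->.
have [[i' j'] [Hi Hj [Ei Ej]]] := allpairsP ij_in; subst i j.
by exists i', j'; move: Hi Hj ij_neq; rewrite !mem_iota /=; split => //; lia.
Qed.

Ltac case_block_mem Hx :=
  first [ case/mem_map_iotaP: Hx => ? -> ?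
        | case/x_m_edgesP: Hx => ? [? [-> ? ? ?]]
        | case/predU1P: Hx => [-> | /mem_map_iotaP[? -> ?]]
        | rewrite /direct_edges !inE in Hx; case/or3P: Hx => /eqP -> ].

Ltac drop_block :=
  rewrite filter_nil_in; last first;
  [ let Hx := fresh "Hx" in move=> ? Hx; case_block_mem Hx;
    rewrite /= ?xpair_eqE /=; first [done | lia]
  | ].

Definition in_edges q (n : node) : seq edge := [seq e <- charqs_edges q | e.2 == n].

Lemma in_edges_N q i : (1 <= i <= q + 3)%N -> in_edges q (N i) = [:: (M i, N i)].
Proof.
move=> Hi; rewrite /in_edges charqs_edges_blocks !filter_cat.
do 4 drop_block.
rewrite (@filter_map_iota_pred1 _ _ _ _ _ i) => [||j]; [|lia|by rewrite /= xpair_eqE].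
by do 5 drop_block.
Qed.

Lemma in_edges_M1 q : in_edges q (M 1) = [:: (X 1, M 1); (S_, M 1)].
Proof.
rewrite /in_edges charqs_edges_blocks !filter_cat.
rewrite (@filter_map_iota_pred1 _ _ _ _ _ 1) => [||j]; [|lia|by rewrite /= xpair_eqE].
rewrite {1}/s_m_edges [filter _ (_ :: _)]/=.
rewrite filter_nil_in => [|x /mem_map_iotaP[j -> ?]]; last by rewrite /= xpair_eqE /=; lia.
by do 8 drop_block.
Qed.

Lemma in_edges_R q k : (2 <= k <= q + 2)%N ->
  in_edges q (R k) = [:: (N k, R k), (N (q + 3), R k) & [seq e <- direct_edges q | e.2 == R k]].
Proof.
move=> Hk; rewrite /in_edges charqs_edges_blocks !filter_cat.
do 5 drop_block.
rewrite (@filter_map_iota_pred1 _ _ _ _ _ k) => [||j]; [|lia|by rewrite /= xpair_eqE].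
rewrite (@filter_map_iota_pred1 _ _ _ _ _ k) => [||j]; [|lia|by rewrite /= xpair_eqE].
by do 2 drop_block.
Qed.

Lemma in_edges_Rlast q : (1 <= q)%N ->
  in_edges q (R (q + 3)) = [seq (N i, R (q + 3)) | i <- iota 1 (q + 2)].
Proof.
move=> Hq; rewrite /in_edges charqs_edges_blocks !filter_cat.
do 7 drop_block.
rewrite (all_filterP _); last by apply/allP => x /mapP[i _ ->].
by do 2 drop_block; rewrite cats0.
Qed.

Lemma mem_charqs_sources q (n : node) :
  (n \in charqs_sources q) = (n == S_) || ((n.1 == 1) && (1 <= n.2 <= q + 2))%N.
Proof.
rewrite /charqs_sources in_cons; congr (_ || _).
apply/mapP/andP => [[i Hi ->] | [/eqP n1 Hn2]]; first by rewrite -mem_iota.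
by exists n.2; [rewrite mem_iota; lia | case: n n1 {Hn2} => ? ? /= ->].
Qed.

Ltac case_charqs_edge He finish :=
  move: He; rewrite charqs_edges_blocks !mem_cat;
  do 9 (case/orP => [He | ]; first by case_block_mem He; finish);
  move=> He; case_block_mem He; finish.

Lemma charqs_edges_layered q e : e \in charqs_edges q ->
  [/\ (e.1 \in charqs_sources q) = (e.1.1 <= 1)%N, (e.1.1 <= 3)%N,
      e.2.1 = 2%N -> (e.1.1 <= 1)%N & e.2.1 = 3%N -> e.1.1 = 2%N].
Proof. by move=> He; case_charqs_edge He ltac:(rewrite mem_charqs_sources /=; split; lia). Qed.

Lemma charqs_edges_tail_M q e k : (2 <= k <= q + 2)%N -> e \in charqs_edges q ->
  e.2 == M k -> e.1 != X k.
Proof. by move=> Hk He; case_charqs_edge He ltac:(rewrite /= !xpair_eqE /=; lia). Qed.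

Section Transfer.

Variables (q : nat) (F : fieldType) (d : nat) (C : vlnc F d).

(* The first component of a node is its depth (0, 1: sources, 2: m_i, 3: n_i), so the
   transfer matrix of an edge propagates the source gains through at most two layers. *)

Definition source_gain (u : node) (e : edge) : 'M[F]_d := if e.1 == u then enc C e else 0.

Definition propagate (t : edge -> 'M[F]_d) (e : edge) : 'M[F]_d :=
  \sum_(e' <- in_edges q e.1) coef C e' e *m t e'.

Definition transfer (u : node) (e : edge) : 'M[F]_d :=
  if (e.1.1 <= 1)%N then source_gain u e
  else if e.1.1 == 2%N then propagate (source_gain u) e
  else propagate (propagate (source_gain u)) e.

Definition unit_msg (u : node) (v : 'cV[F]_d) (n : node) : 'cV[F]_d := if n == u then v else 0.

Lemma transfer_edge_vectors u v : edge_vectors_ok (charqs_edges q) (charqs_sources q) C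
  (unit_msg u v) (fun e => transfer u e *m v).
Proof.
move=> e /charqs_edges_layered[-> e1_le3 _ _]; rewrite /transfer.
case: ifP => [e1_le1 | e1_gt1]; rewrite ?e1_le1 ?e1_gt1.
  by rewrite /source_gain /unit_msg; case: (e.1 == u); rewrite ?mul0mx ?mulmx0.
case: ifP => e1_2; rewrite /propagate big_filter mulmx_suml big_seq_cond [RHS]big_seq_cond;
  apply: eq_bigr => e' /andP[e'E /eqP e'_head];
  have [_ _ into_M into_N] := charqs_edges_layered e'E; rewrite -mulmxA /transfer.
- by rewrite into_M // e'_head (eqP e1_2).
- by rewrite into_N //= e'_head; move: (e.1.1) e1_gt1 e1_2 e1_le3; lia.
Qed.

Definition e_transfer (u : node) (i : nat) : 'M[F]_d := transfer u (M i, N i).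

Definition gain (t v : node) (i : nat) : 'M[F]_d :=
  dec C t v (N i, t) *m coef C (M i, N i) (N i, t).

Lemma dec_transfer_N u t v i : (1 <= i <= q + 3)%N ->
  dec C t v (N i, t) *m transfer u (N i, t) = gain t v i *m e_transfer u i.
Proof. by move=> Hi; rewrite {1}/transfer /= /propagate in_edges_N // big_seq1 mulmxA. Qed.

Lemma e_transfer_diag k : (2 <= k <= q + 2)%N -> e_transfer (X k) k = 0.
Proof.
move=> Hk; rewrite /e_transfer /transfer /= /propagate big_seq big1 // => e.
rewrite mem_filter => /andP[e_head eE].
by rewrite /source_gain (negbTE (charqs_edges_tail_M Hk eE e_head)) mulmx0.
Qed.

Lemma e_transfer_e1_X j : j != 1%N -> e_transfer (X j) 1 = 0.
Proof.
move=> j_neq1; rewrite /e_transfer /transfer /= /propagate in_edges_M1 big_cons big_seq1.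
by rewrite /source_gain /= !xpair_eqE /= eq_sym (negbTE j_neq1) !mulmx0 addr0.
Qed.

Lemma e_transfer_e1_s : e_transfer S_ 1 = s_coeff_e1 C.
Proof.
rewrite /e_transfer /transfer /= /propagate in_edges_M1 big_cons big_seq1.
by rewrite /source_gain /= mulmx0 add0r.
Qed.

Hypothesis C_sol : charqs_solution q C.

Lemma decode_transfer u t v : (t, v) \in charqs_demands q ->
  \sum_(e <- in_edges q t) dec C t v e *m transfer u e = if v == u then 1%:M else 0.
Proof.
move=> tv_dem; apply: eq_mx_cV => w; rewrite big_filter mulmx_suml.
under eq_bigr do rewrite -mulmxA.
rewrite (C_sol (transfer_edge_vectors u w) tv_dem) /unit_msg /=.
by case: (v == u); rewrite ?mul1mx ?mul0mx.
Qed.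

Lemma decode_R k j : (2 <= k <= q + 2)%N -> (2 <= j)%N ->
  gain (R k) (X k) k *m e_transfer (X j) k + gain (R k) (X k) (q + 3) *m e_transfer (X j) (q + 3)
  = if k == j then 1%:M else 0.
Proof.
move=> Hk Hj; have j_neq1 : (1 == j)%N = false by apply/eqP; lia.
have kdem : (R k, X k) \in charqs_demands q.
  by rewrite in_cons mem_cat (map_f (fun i => (R i, X i))) ?orbT // mem_iota; lia.
have := decode_transfer (X j) kdem; rewrite in_edges_R // !big_cons.
rewrite big_seq big1 => [|e]; last first.
  rewrite mem_filter => /andP[_]; rewrite !inE => /or3P[] /eqP ->;
  by rewrite /transfer /source_gain /= ?xpair_eqE /= ?j_neq1 mulmx0.
by rewrite addr0 !dec_transfer_N ?xpair_eqE //=; lia.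
Qed.

Lemma decode_Rlast u : (1 <= q)%N ->
  gain (R (q + 3)) (X 1) 1 *m e_transfer u 1
  + \sum_(i <- iota 2 q.+1) gain (R (q + 3)) (X 1) i *m e_transfer u i
  = if X 1 == u then 1%:M else 0.
Proof.
move=> q_gt0.
have lastdem : (R (q + 3), X 1) \in charqs_demands q.
  by rewrite in_cons mem_cat mem_seq1 eqxx !orbT.
rewrite -(decode_transfer u lastdem) in_edges_Rlast // big_map addn2 [RHS]big_cons.
rewrite dec_transfer_N; last lia.
congr (_ + _); rewrite big_seq [RHS]big_seq.
by apply: eq_bigr => i; rewrite mem_iota => Hi; rewrite dec_transfer_N //; lia.
Qed.

End Transfer.

Theorem lemma2 (q p : nat) (F : finFieldType) (d : nat) (C : vlnc F d) :
  (2 <= q)%N -> prime p -> ~~ (p %| q)%N -> p \in [pchar F] -> (0 < d)%N ->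
  charqs_solution q C -> s_coeff_e1 C = 0.
Proof.
move=> q_ge2 _ p_ndvd_q p_char _ C_sol; have q_gt0 : (0 < q)%N := ltnW q_ge2.
have memI k : (k \in iota 2 q.+1) = (2 <= k <= q + 2)%N by rewrite mem_iota; apply/idP/idP; lia.
have gains_eq0 : {in iota 2 q.+1, forall i, gain C (R (q + 3)) (X 1) i = 0}.
  move=> i; apply: (decoding_gains_eq0 (W := fun k => gain C (R k) (X k) k)
    (Z := fun k => gain C (R k) (X k) (q + 3)) (K := fun j => e_transfer q C (X j) (q + 3))
    (Mx := fun k j => e_transfer q C (X j) k)).
  - exact: iota_uniq.
  - by rewrite size_iota -(dvdn_pcharf p_char).
  - by move=> k j; rewrite !memI => Hk Hj; apply: decode_R => //; lia.
  - by move=> k; rewrite memI => /e_transfer_diag.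
  - move=> j; rewrite memI => Hj; have := decode_Rlast C_sol (X j) q_gt0.
    rewrite e_transfer_e1_X; last by apply/eqP; lia.
    by rewrite mulmx0 add0r xpair_eqE /=; case: eqP => //; lia.
have sum_eq0 u : \sum_(i <- iota 2 q.+1) gain C (R (q + 3)) (X 1) i *m e_transfer q C u i = 0.
  by rewrite big_seq big1 // => i /gains_eq0 ->; rewrite mul0mx.
have := decode_Rlast C_sol (X 1) q_gt0; rewrite sum_eq0 addr0 eqxx => /mulmx1C e1x.
have := decode_Rlast C_sol S_ q_gt0; rewrite sum_eq0 addr0 /= => e1s.
by rewrite -(e_transfer_e1_s q) -[e_transfer q C S_ 1]mul1mx -e1x -mulmxA e1s mulmx0.
Qed.
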